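(* Let $1\leq e_1\leq\cdots\leq e_m$ be integers and let $b_i$ be integers with $0\leq b_i\leq e_i-1$ for $i=1,\ldots,m$. Then for every $k=1,\ldots,m$, $$\prod_{i=1}^m(e_i-b_i)\geq\Big(\sum_{i=1}^k(e_i-b_i)-(k-1)-\sum_{i=k+1}^m b_i\Big)e_{k+1}\cdots e_m,$$ where for $k=m$ the product $e_{k+1}\cdots e_m$ is $1$ and the sum $\sum_{i=k+1}^m b_i$ is $0$. *)

From mathcomp Require Import all_boot all_order all_algebra.
Set Implicit Arguments.
Unset Strict Implicit.
Unset Printing Implicit Defensive.

From mathcomp Require Import all_boot all_order all_algebra.
From mathcomp Require Import zify ring lra.
Import Order.TTheory GRing.Theory Num.Theory.

(* Write Z(k,m) for the first factor of the bound and induct on m. Going from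
   m to m+1 multiplies the product by e_{m+1} - b_{m+1}, the tail product by
   e_{m+1}, and lowers Z by b_{m+1}; this preserves the bound as long as
   Z(k,m) <= e_{m+1}. Otherwise one trades k for k-1, using
   Z(k,m) = Z(k-1,m) + e_k - 1 with e_k <= e_{m+1} and xy >= x + y - 1 for
   x, y >= 1. *)

Set Implicit Arguments.
Unset Strict Implicit.
Unset Printing Implicit Defensive.

Local Open Scope ring_scope.

Section Inequalities.
Variable R : realDomainType.
Implicit Types x y z f E b : R.

Lemma add_sub1_le_mul x y : 1 <= x -> 1 <= y -> x + y - 1 <= x * y.
Proof. by move=> x1 y1; nra. Qed.

Lemma sub_mul_le_mul_sub z E b : z <= E -> 0 <= b -> (z - b) * E <= z * (E - b).
Proof. by move=> zE b0; nra. Qed.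

Lemma merge_mul_le z f E b : 1 <= z <= E -> 1 <= f <= E -> 0 <= b <= E - 1 ->
  (z + f - 1 - b) * E <= z * f * (E - b).
Proof.
(* Equivalently b (z f - E) <= (z - 1) (f - 1) E; when z f > E, bound b by
   E - 1 and use (E - z) (E - f) >= 0. *)
move=> /andP[z1 zE] /andP[f1 fE] /andP[b0 bE].
have cross : 0 <= (E - z) * (E - f) by rewrite mulr_ge0 ?subr_ge0.
have prod1 : 0 <= (z - 1) * (f - 1) * E by rewrite !mulr_ge0 ?subr_ge0 //; lra.
have [zfE|Ezf] := lerP (z * f) E.
  have : 0 <= b * (E - z * f) by rewrite mulr_ge0 ?subr_ge0.
  nra.
have : 0 <= (E - 1 - b) * (z * f - E) by rewrite mulr_ge0 ?subr_ge0 //; lra.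
nra.
Qed.

Lemma sum_sub_le_prod (a : nat -> R) n : (forall i, (1 <= i <= n)%N -> 1 <= a i) ->
  1 <= \prod_(1 <= i < n.+1) a i /\
  \sum_(1 <= i < n.+1) a i - (n%:R - 1) <= \prod_(1 <= i < n.+1) a i.
Proof.
elim: n => [|n IHn] a_ge1; first by rewrite !big_geq //; split; lra.
have [prod_ge1 IH] : 1 <= \prod_(1 <= i < n.+1) a i /\
    \sum_(1 <= i < n.+1) a i - (n%:R - 1) <= \prod_(1 <= i < n.+1) a i.
  by apply: IHn => i lei; apply: a_ge1; lia.
have an_ge1 : 1 <= a n.+1 by apply: a_ge1; rewrite leqnn.
rewrite !(big_nat_recr n.+1) //= -natr1; split; first nra.
have := add_sub1_le_mul prod_ge1 an_ge1; lra.
Qed.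

End Inequalities.

Section ProductBound.
Variables (R : realDomainType) (M : nat) (e b : nat -> R).

Definition bound_coef k m : R :=
  \sum_(1 <= i < k.+1) (e i - b i) - (k%:R - 1) - \sum_(k.+1 <= i < m.+1) b i.
Definition tail_prod k m : R := \prod_(k.+1 <= i < m.+1) e i.
Definition diff_prod m : R := \prod_(1 <= i < m.+1) (e i - b i).

Lemma bound_coefSm k m : (k <= m)%N -> bound_coef k m.+1 = bound_coef k m - b m.+1.
Proof. by move=> le_km; rewrite /bound_coef (big_nat_recr m.+1) //=; ring. Qed.

Lemma bound_coefSk k m : (k < m)%N -> bound_coef k.+1 m = bound_coef k m + e k.+1 - 1.
Proof.
move=> lt_km; rewrite /bound_coef (big_nat_recr k.+1) // (big_ltn (m := k.+1)) //=.
by rewrite -natr1; ring.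
Qed.

Lemma bound_coef_diag m : bound_coef m m = \sum_(1 <= i < m.+1) (e i - b i) - (m%:R - 1).
Proof. by rewrite /bound_coef (big_geq (m := m.+1)) // subr0. Qed.

Lemma tail_prodSm k m : (k <= m)%N -> tail_prod k m.+1 = tail_prod k m * e m.+1.
Proof. by move=> le_km; rewrite /tail_prod big_nat_recr. Qed.

Lemma tail_prodSk k m : (k < m)%N -> tail_prod k m = e k.+1 * tail_prod k.+1 m.
Proof. by move=> lt_km; rewrite /tail_prod big_ltn. Qed.

Lemma tail_prod_diag m : tail_prod m m = 1.
Proof. by rewrite /tail_prod big_geq. Qed.

Lemma diff_prodS m : diff_prod m.+1 = diff_prod m * (e m.+1 - b m.+1).
Proof. by rewrite /diff_prod big_nat_recr. Qed.

Hypothesis e_ge1 : forall i, (1 <= i <= M)%N -> 1 <= e i.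
Hypothesis e_mono : forall i j, (1 <= i)%N -> (i <= j)%N -> (j <= M)%N -> e i <= e j.
Hypothesis b_bound : forall i, (1 <= i <= M)%N -> 0 <= b i <= e i - 1.

Lemma tail_prod_ge0 k m : (m <= M)%N -> 0 <= tail_prod k m.
Proof.
move=> le_mM; rewrite /tail_prod big_seq_cond; apply: prodr_ge0 => i /andP[].
rewrite mem_index_iota => /andP[lt_ki lt_im] _.
by apply: le_trans (e_ge1 _) => //; lia.
Qed.

Lemma bound_coef_diag_le m : (m <= M)%N -> bound_coef m m <= diff_prod m.
Proof.
move=> le_mM; rewrite bound_coef_diag; apply: (proj2 (sum_sub_le_prod _)) => i le_i.
have /andP[_ bi_le] : 0 <= b i <= e i - 1 by apply: b_bound; lia.
lra.
Qed.

Lemma bound_coef1_le m : (1 <= m <= M)%N -> bound_coef 1 m <= e 1.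
Proof.
move=> le_1mM; rewrite /bound_coef big_nat1.
have /andP[b1_ge0 _] : 0 <= b 1 <= e 1 - 1 by apply: b_bound; lia.
have : 0 <= \sum_(2 <= i < m.+1) b i.
  rewrite big_seq_cond; apply: sumr_ge0 => i /andP[]; rewrite mem_index_iota => le_i _.
  by have /andP[] : 0 <= b i <= e i - 1 by apply: b_bound; lia.
lra.
Qed.

Lemma bound_extend k m : (k <= m)%N -> (m < M)%N ->
  bound_coef k m * tail_prod k m <= diff_prod m -> bound_coef k m <= e m.+1 ->
  bound_coef k m.+1 * tail_prod k m.+1 <= diff_prod m.+1.
Proof.
move=> le_km lt_mM IH Z_le; rewrite bound_coefSm // tail_prodSm // diff_prodS.
have /andP[b_ge0 b_le] : 0 <= b m.+1 <= e m.+1 - 1 by apply: b_bound; lia.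
have T_ge0 := tail_prod_ge0 k (ltnW lt_mM).
have /(ler_wpM2r T_ge0) := sub_mul_le_mul_sub Z_le b_ge0.
have : bound_coef k m * tail_prod k m * (e m.+1 - b m.+1)
       <= diff_prod m * (e m.+1 - b m.+1) by rewrite ler_wpM2r // subr_ge0; lra.
nra.
Qed.

Lemma bound_merge k m : (k < m)%N -> (m < M)%N ->
  bound_coef k m * tail_prod k m <= diff_prod m -> 1 <= bound_coef k m <= e m.+1 ->
  bound_coef k.+1 m.+1 * tail_prod k.+1 m.+1 <= diff_prod m.+1.
Proof.
move=> lt_km lt_mM IH Z_range.
rewrite bound_coefSm // bound_coefSk // tail_prodSm // diff_prodS.
rewrite tail_prodSk // in IH.
have f_range : 1 <= e k.+1 <= e m.+1.
  by rewrite e_ge1 ?e_mono //=; lia.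
have B_range : 0 <= b m.+1 <= e m.+1 - 1 by apply: b_bound; lia.
have T_ge0 := tail_prod_ge0 k.+1 (ltnW lt_mM).
have /(ler_wpM2r T_ge0) := merge_mul_le Z_range f_range B_range.
have : bound_coef k m * (e k.+1 * tail_prod k.+1 m) * (e m.+1 - b m.+1)
       <= diff_prod m * (e m.+1 - b m.+1).
  by rewrite ler_wpM2r // subr_ge0; case/andP: B_range => _; lra.
nra.
Qed.

Lemma bound_shift k n : (k < n)%N -> (n <= M)%N -> 1 <= bound_coef k n ->
  bound_coef k n * tail_prod k n <= diff_prod n ->
  bound_coef k.+1 n * tail_prod k.+1 n <= diff_prod n.
Proof.
move=> lt_kn le_nM Z_ge1 IH; rewrite bound_coefSk //; rewrite tail_prodSk // in IH.
have f_ge1 : 1 <= e k.+1 by apply: e_ge1; lia.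
have T_ge0 := tail_prod_ge0 k.+1 le_nM.
have /(ler_wpM2r T_ge0) := add_sub1_le_mul Z_ge1 f_ge1.
nra.
Qed.

Lemma bound_le_diff_prod m : (m <= M)%N -> forall k, (1 <= k <= m)%N ->
  bound_coef k m * tail_prod k m <= diff_prod m.
Proof.
elim: m => [|m IHm] le_mM; first by move=> [|k].
have IH k : (1 <= k <= m)%N -> bound_coef k m * tail_prod k m <= diff_prod m.
  exact: IHm (ltnW le_mM) k.
elim=> [//|k IHk] /andP[_ le_km1].
have [->|ne_km] := eqVneq k m.
  by rewrite tail_prod_diag mulr1; apply: bound_coef_diag_le.
have lt_km : (k < m)%N by lia.
have [Z_le|Z_gt] := lerP (bound_coef k.+1 m) (e m.+1).
  by apply: bound_extend => //; apply: IH; lia.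
have k_ge1 : (0 < k)%N.
  case: (posnP k) => [k0|//]; move: Z_gt; rewrite k0 ltNge => /negP[].
  by apply: le_trans (bound_coef1_le _) (e_mono _ _ _); lia.
have Z_ge1 : 1 <= bound_coef k m.
  have : e k.+1 <= e m.+1 by apply: e_mono; lia.
  move: Z_gt; rewrite bound_coefSk //; lra.
have [Zk_le|Zk_gt] := lerP (bound_coef k m) (e m.+1).
  by apply: bound_merge => //; [apply: IH; lia | rewrite Z_ge1].
apply: bound_shift => //; last by apply: IHk; lia.
have /andP[_ b_le] : 0 <= b m.+1 <= e m.+1 - 1 by apply: b_bound; lia.
rewrite bound_coefSm; last lia.
lra.
Qed.

End ProductBound.

Theorem lemma5p5 (m : nat) (e b : nat -> int)
  (he1 : forall i : nat, (1 <= i <= m)%N -> 1 <= e i)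
  (hmono : forall i j : nat, (1 <= i)%N -> (i <= j)%N -> (j <= m)%N -> e i <= e j)
  (hb : forall i : nat, (1 <= i <= m)%N -> 0 <= b i <= e i - 1) :
  forall k : nat, (1 <= k <= m)%N ->
    (\sum_(1 <= i < k.+1) (e i - b i) - (k%:Z - 1)
       - \sum_(k.+1 <= i < m.+1) b i) * \prod_(k.+1 <= i < m.+1) e i
    <= \prod_(1 <= i < m.+1) (e i - b i).
Proof.
move=> k le_k; have := bound_le_diff_prod he1 hmono hb (leqnn m) le_k.
by rewrite /bound_coef natz.
Qed.
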